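(* Let $H$ be an oriented graph on $h$ vertices that is not $2$-colorable. Then the graph $K(H)$ contains a cycle $c_1c_2\dots c_\ell c_1$ of length $\ell\ge3$ with the following property: for any labeling of the vertices of $H$ by $1,\dots,h$ with corresponding backedge graph $G$, and for every order-preserving homomorphism $f:G\to K(H)$, there are vertices $u_1\in f^{-1}(c_1),\dots,u_\ell\in f^{-1}(c_\ell)$ such that $u_1u_2\dots u_\ell u_1$ is a cycle in $G$.
   Context: An oriented graph is $2$-colorable if its vertex set can be partitioned into $2$ sets each inducing an acyclic digraph. Graphs are undirected with vertex sets that are subsets of $\mathbb{N}$; subgraphs inherit labels. Given a labeling of $V(H)$ by $1,\dots,h$, the backedge graph of $H$ is the undirected graph on $[h]$ with $\{i,j\}$ an edge iff $i<j$ and $j\to i$ in $H$. An order-preserving homomorphism from $G$ to $G'$ is a map $f:V(G)\to V(G')$ with $f(i)\le f(j)$ whenever $i\le j$ and mapping edges to edges; an order-preserving isomorphism is one that is also a graph isomorphism. The ordered core of $G$ is a subgraph of $G$ with the fewest vertices among subgraphs to which $G$ has an order-preserving homomorphism. Let $\mathcal{C}(H)$ be the set of ordered cores of the backedge graphs of $H$ over all $h!$ labelings of $V(H)$ by $1,\dots,h$. $K(H)$ denotes a fixed element of $\mathcal{C}(H)$ such that for every $C\in\mathcal{C}(H)$, if there is an order-preserving homomorphism from $C$ to $K(H)$ then there is an order-preserving isomorphism between $C$ and $K(H)$. *)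

From mathcomp Require Import all_boot fingroup perm.
Set Implicit Arguments. Unset Strict Implicit. Unset Printing Implicit Defensive.

(* An oriented graph H on vertex set 'I_h, given by its arc relation:
   no loops and no pair of opposite arcs. *)
Definition oriented (h : nat) (arc : rel 'I_h) : Prop :=
  forall x y : 'I_h, arc x y -> ~~ arc y x.

Definition acyclic_on (h : nat) (arc : rel 'I_h) (S : {set 'I_h}) : Prop :=
  forall s : seq 'I_h, s != [::] -> uniq s -> all (mem S) s -> ~~ path.cycle arc s.

Definition two_colorable (h : nat) (arc : rel 'I_h) : Prop :=
  exists A : {set 'I_h}, acyclic_on arc A /\ acyclic_on arc (~: A).

(* (Undirected) graphs whose vertex sets are subsets of the label set
   [h] = 'I_h (ordered by the natural order). *)
Record ograph (h : nat) := OGraph { overt : {set 'I_h}; oedge : rel 'I_h }.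

Definition is_graph (h : nat) (G : ograph h) : Prop :=
  [/\ forall x y, oedge G x y -> oedge G y x,
      forall x, ~~ oedge G x x &
      forall x y, oedge G x y -> (x \in overt G) && (y \in overt G)].

Definition is_subgraph (h : nat) (C G : ograph h) : Prop :=
  [/\ is_graph C, overt C \subset overt G &
      forall x y, oedge C x y -> oedge G x y].

Definition ohom (h : nat) (G G' : ograph h) (f : 'I_h -> 'I_h) : Prop :=
  [/\ forall x, x \in overt G -> f x \in overt G',
      forall x y, x \in overt G -> y \in overt G -> x <= y -> f x <= f y &
      forall x y, x \in overt G -> y \in overt G ->
        oedge G x y -> oedge G' (f x) (f y)].

Definition ohom_exists (h : nat) (G G' : ograph h) : Prop :=
  exists f, ohom G G' f.

Definition oiso (h : nat) (G G' : ograph h) : Prop :=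
  exists f, [/\ ohom G G' f, {in overt G &, injective f},
                f @: overt G = overt G' &
                forall x y, x \in overt G -> y \in overt G ->
                  oedge G' (f x) (f y) -> oedge G x y].

Definition is_ordered_core (h : nat) (C G : ograph h) : Prop :=
  [/\ is_subgraph C G, ohom_exists G C &
      forall C', is_subgraph C' G -> ohom_exists G C' ->
        #|overt C| <= #|overt C'|].

(* Backedge graph for the labeling p (vertex v of H gets label p v):
   {i,j} is an edge iff i < j and (vertex labelled j) -> (vertex labelled i). *)
Definition backedge_graph (h : nat) (arc : rel 'I_h) (p : {perm 'I_h}) : ograph h :=
  OGraph [set: 'I_h]
    (fun i j => [exists u, exists v, (p u == i) && (p v == j) &&
       (((i < j) && arc v u) || ((j < i) && arc u v))]).

Definition in_cores (h : nat) (arc : rel 'I_h) (C : ograph h) : Prop :=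
  exists p : {perm 'I_h}, is_ordered_core C (backedge_graph arc p).

From mathcomp Require Import all_boot fingroup perm.
From Stdlib Require Import Classical.
Set Implicit Arguments. Unset Strict Implicit. Unset Printing Implicit Defensive.

(* If K had no cycle it would be a forest, hence properly 2-colourable.  Pulling the
   colouring back along the homomorphism from the backedge graph of a labelling that
   produces K gives a partition of H in which no class contains a backward arc, so both
   classes are acyclic: H would be 2-colourable.  Hence K has a cycle.
   To lift it along an order-preserving f : G -> K, take an ordered core C of G.  It lies
   in C(H) and maps to K, so minimality of K yields an order isomorphism psi : C -> K.
   Then psi^-1 o f is an order-preserving endomorphism of the core C; it is injective
   (otherwise its image would be a smaller core), hence the identity on the chain V(C).
   So f agrees with psi on C, and psi^-1 carries every cycle of K to a cycle of G
   lying above it. *)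

Section IncreasingMaps.
Variable h : nat.
Implicit Types (S T : {set 'I_h}) (F G : 'I_h -> 'I_h).

Lemma card_lt_imset_incr S T F x :
  {in S &, injective F} -> {in S &, {homo F : y z / y <= z}} -> F @: S = T ->
  x \in S -> #|[set k in T | k < F x]| = #|[set y in S | y < x]|.
Proof.
move=> Finj Fincr <- xS.
have -> : [set k in F @: S | k < F x] = F @: [set y in S | y < x].
  apply/setP => k; rewrite inE; apply/andP/imsetP => [[/imsetP[y yS ->] ltFyx]|].
    exists y => //; rewrite inE yS ltnNge; apply: contraL ltFyx => lexy.
    by rewrite -leqNgt Fincr.
  move=> [y]; rewrite inE => /andP[yS ltyx] ->; split; first exact: imset_f.
  rewrite ltn_neqAle Fincr ?(ltnW ltyx) // andbT.
  by apply: contraTneq ltyx => /val_inj/(Finj _ _ yS xS)->; rewrite ltnn.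
by apply: card_in_imset => y z; rewrite !inE => /andP[yS _] /andP[zS _]; apply: Finj.
Qed.

Lemma eq_in_incr_imset S T F G :
  {in S &, injective F} -> {in S &, {homo F : x y / x <= y}} -> F @: S = T ->
  {in S &, injective G} -> {in S &, {homo G : x y / x <= y}} -> G @: S = T ->
  {in S, F =1 G}.
Proof.
move=> Finj Fincr FST Ginj Gincr GST x xS.
have rank_incr a b : a \in T -> a < b ->
    #|[set k in T | k < a]| < #|[set k in T | k < b]|.
  move=> aT ltab; apply: proper_card; rewrite properE; apply/andP; split.
    by apply/subsetP => k; rewrite !inE => /andP[-> ltka]; apply: ltn_trans ltab.
  by apply/subsetPn; exists a; rewrite !inE ?ltnn ?andbF // aT ltab.
have FxT : F x \in T by rewrite -FST imset_f.
have GxT : G x \in T by rewrite -GST imset_f.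
have rankFG := card_lt_imset_incr Finj Fincr FST xS.
rewrite -(card_lt_imset_incr Ginj Gincr GST xS) in rankFG.
apply: ord_inj; apply/eqP; rewrite eqn_leq; apply/andP; split; rewrite leqNgt.
  by apply/negP => /(rank_incr _ _ GxT); rewrite rankFG ltnn.
by apply/negP => /(rank_incr _ _ FxT); rewrite rankFG ltnn.
Qed.

Lemma incr_endo_id S F :
  {in S &, injective F} -> {in S &, {homo F : x y / x <= y}} ->
  {subset F @: S <= S} -> {in S, F =1 id}.
Proof.
move=> Finj Fincr FS; have FSS : F @: S = S.
  by apply/eqP; rewrite eqEcard (card_in_imset Finj) leqnn andbT; apply/subsetP.
by apply: eq_in_incr_imset Finj Fincr FSS _ _ (imset_id S).
Qed.

Definition inv_on S F (k : 'I_h) : 'I_h := odflt k [pick x in S | F x == k].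

Lemma inv_onP S F k : k \in F @: S -> inv_on S F k \in S /\ F (inv_on S F k) = k.
Proof.
move=> /imsetP[x xS ->]; rewrite /inv_on.
by case: pickP => [y /andP[yS /eqP->] | /(_ x)] //=; rewrite xS eqxx.
Qed.

Lemma inv_on_incr S F :
  {in S &, {homo F : x y / x <= y}} ->
  {in F @: S &, {homo inv_on S F : k l / k <= l}}.
Proof.
move=> Fincr k l kFS lFS lekl; have [kS Fk] := inv_onP kFS; have [lS Fl] := inv_onP lFS.
rewrite leqNgt; apply: contraTN lekl => ltlk.
rewrite -ltnNge ltn_neqAle -{2}Fk -{2}Fl Fincr ?(ltnW ltlk) // andbT.
by apply: contraTneq ltlk => /val_inj->; rewrite ltnn.
Qed.
End IncreasingMaps.

Section CycleOrTwoColoring.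
Variables (T : finType) (e : rel T).
Hypotheses (e_irr : irreflexive e) (e_sym : symmetric e).
Implicit Types (V : {set T}) (x y z : T) (s c : seq T).

Definition graph_cycle_in V c :=
  [/\ 3 <= size c, uniq c, all (mem V) c & path.cycle e c].

Definition proper_2coloring_on V (col : T -> bool) :=
  {in V &, forall x y, e x y -> col x != col y}.

Definition nbhd V x := [set y in V | e x y].

Lemma extend_path_or_close_cycle V x y s :
  1 < #|nbhd V x| -> uniq [:: x, y & s] -> all (mem V) [:: x, y & s] ->
  path e x (y :: s) ->
  (exists c, graph_cycle_in V c) \/ exists2 z, z \in nbhd V x & z \notin [:: x, y & s].
Proof.
move=> /card_gt1P[a [b [aN bN neq_ab]]] uniq_xys V_xys path_xys.
have [z zN neq_zy] : exists2 z, z \in nbhd V x & z != y.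
  by case: (eqVneq a y) => [eq_ay|]; [exists b; rewrite // -eq_ay eq_sym | exists a].
have [z_xys|] := boolP (z \in [:: x, y & s]); last by right; exists z.
have e_xz : e x z by move: zN; rewrite inE => /andP[].
have neq_zx : z != x by apply: contraTneq e_xz => ->; rewrite e_irr.
have z_s : z \in s by move: z_xys; rewrite !inE (negbTE neq_zx) (negbTE neq_zy).
have take_xys : [:: x, y & take (index z s).+1 s] = take (index z s).+3 [:: x, y & s] by [].
left; exists [:: x, y & take (index z s).+1 s]; split.
- by rewrite /= size_takel // index_mem.
- by rewrite take_xys take_uniq.
- by apply/allP => w; rewrite take_xys => /mem_take/(allP V_xys).
rewrite /path.cycle rcons_path; apply/andP; split.
  exact: take_path (index z s).+2 path_xys.
by rewrite (take_nth z) ?index_mem // nth_index // -rcons_cons last_rcons e_sym.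
Qed.

Lemma cycle_of_min_degree2 V x y s :
  {in V, forall v, 1 < #|nbhd V v|} ->
  uniq [:: x, y & s] -> all (mem V) [:: x, y & s] -> path e x (y :: s) ->
  exists c, graph_cycle_in V c.
Proof.
move=> deg2; move: {2}(#|V| - size s) (leqnn (#|V| - size s)) => n.
elim: n x y s => [|n IHn] x y s le_n uniq_xys V_xys path_xys.
  have : size [:: x, y & s] <= #|V|.
    by rewrite cardE uniq_leq_size // => w /(allP V_xys); rewrite mem_enum.
  move: le_n; rewrite leqn0 subn_eq0 => le_V /leq_trans/(_ le_V).
  by rewrite /= ltnNge leqnSn.
have xV : x \in V by case/andP: V_xys.
have [//|[z zN z_xys]] := extend_path_or_close_cycle (deg2 x xV) uniq_xys V_xys path_xys.
move: zN; rewrite inE => /andP[zV e_xz].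
apply: (IHn z x (y :: s)).
- by move: le_n; rewrite subnS; case: (#|V| - size s).
- by rewrite cons_uniq z_xys.
- by rewrite /= zV.
- by rewrite /= e_sym e_xz.
Qed.

Lemma cycle_or_proper_2coloring V :
  (exists c, graph_cycle_in V c) \/ exists col, proper_2coloring_on V col.
Proof.
move: {2}#|V| (erefl #|V|) => n; elim: n V => [|n IHn] V cardV.
  by right; exists xpredT => x y; rewrite (cards0_eq cardV) inE.
have [/exists_inP[v vV deg_v]|/exists_inPn no_leaf] :=
  boolP [exists v in V, #|nbhd V v| <= 1].
  have cardVv : #|V :\ v| = n by move: cardV; rewrite (cardsD1 v) vV => -[].
  have [[c [c3 uniq_c Vvc cycle_c]]|[col col_ok]] := IHn _ cardVv.
    left; exists c; split=> //.
    by apply: sub_all Vvc => w; rewrite /= in_setD1 => /andP[].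
  pose w := odflt v [pick y in nbhd V v].
  have nbhd_v y : y \in V -> e v y -> y != v /\ w = y.
    move=> yV e_vy; have yN : y \in nbhd V v by rewrite inE yV.
    split; first by apply: contraTneq e_vy => ->; rewrite e_irr.
    rewrite /w; case: pickP => [w' w'N | /(_ y)]; last by rewrite yN.
    by have := card_le1P deg_v y yN w'; rewrite w'N => /esym/eqP.
  right; exists (fun x => if x == v then ~~ col w else col x) => x y xV yV e_xy.
  have [eq_xv | neq_xv] := eqVneq x v; have [eq_yv | neq_yv] := eqVneq y v.
  - by move: e_xy; rewrite eq_xv eq_yv e_irr.
  - by move: e_xy; rewrite eq_xv => /(nbhd_v y yV)[_ ->]; case: (col y).
  - by move: e_xy; rewrite eq_yv e_sym => /(nbhd_v x xV)[_ ->]; case: (col x).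
  - by apply: col_ok; rewrite // in_setD1 ?neq_xv ?neq_yv.
left.
have /card_gt0P[v vV] : 0 < #|V| by rewrite cardV.
have /card_gt0P[y /[!inE] /andP[yV e_vy]] : 0 < #|nbhd V v|.
  by apply: ltnW; rewrite ltnNge no_leaf.
have deg2 : {in V, forall u, 1 < #|nbhd V u|} by move=> u uV; rewrite ltnNge no_leaf.
apply: (@cycle_of_min_degree2 V v y [::] deg2); rewrite /= ?vV ?yV ?e_vy // inE andbT.
by apply: contraTneq e_vy => ->; rewrite e_irr.
Qed.
End CycleOrTwoColoring.

Lemma graph_cycle_lift (T : finType) (U : eqType) (e : rel T) (e' : rel U)
    (V : {set T}) (f : U -> T) (g : T -> U) c :
  graph_cycle_in e V c -> {in V, cancel g f} ->
  {in V &, forall k l, e k l -> e' (g k) (g l)} ->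
  [/\ size (map g c) = size c, map f (map g c) = c, uniq (map g c)
     & path.cycle e' (map g c)].
Proof.
move=> [_ uniq_c Vc cycle_c] gK g_edge.
have fgc : map f (map g c) = c by rewrite -map_comp; apply: map_id_in => k /(allP Vc)/gK.
split; rewrite ?size_map //; first by move: uniq_c; rewrite -{1}fgc => /map_uniq.
by rewrite cycle_map; apply: sub_in_cycle Vc cycle_c.
Qed.

Lemma ex_minimizer (T : Type) (m : T -> nat) (P : T -> Prop) x :
  P x -> exists2 y, P y & forall z, P z -> m y <= m z.
Proof.
move: {2}(m x) (leqnn (m x)) => n; elim: n x => [|n IHn] x le_mx Px.
  by exists x => // z _; move: le_mx; rewrite leqn0 => /eqP->.
have [[z [Pz lt_zx]]|no_smaller] := classic (exists z, P z /\ m z < m x).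
  by apply: (IHn z) => //; rewrite -ltnS (leq_trans lt_zx).
by exists x => // z Pz; rewrite leqNgt; apply/negP => lt_zx; apply: no_smaller; exists z.
Qed.

Section OrderedGraphs.
Variable h : nat.
Implicit Types (G C K : ograph h) (f g t : 'I_h -> 'I_h) (W : {set 'I_h}).

Lemma oedge_sym G : is_graph G -> symmetric (oedge G).
Proof. by case=> G_sym _ _ x y; apply/idP/idP => /G_sym. Qed.

Lemma oedge_irr G : is_graph G -> irreflexive (oedge G).
Proof. by case=> _ G_irr _ x; apply: negbTE. Qed.

Lemma ohom_comp G1 G2 G3 f g : ohom G1 G2 f -> ohom G2 G3 g -> ohom G1 G3 (g \o f).
Proof.
move=> [fV f_incr f_edge] [gV g_incr g_edge].
split=> [x xV | x y xV yV le_xy | x y xV yV e_xy].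
- exact/gV/fV.
- by apply: g_incr; rewrite ?fV ?f_incr.
- by apply: g_edge; rewrite ?fV ?f_edge.
Qed.

Lemma ohom_subgraph C G K f : is_subgraph C G -> ohom G K f -> ohom C K f.
Proof.
move=> [_ /subsetP CG CG_edge] [fV f_incr f_edge].
split=> [x /CG/fV // | x y /CG xG /CG yG | x y /CG xG /CG yG /CG_edge].
  exact: f_incr.
exact: f_edge.
Qed.

Definition induced C W := OGraph W (fun x y => [&& oedge C x y, x \in W & y \in W]).

Lemma induced_subgraph C G W :
  is_subgraph C G -> W \subset overt C -> is_subgraph (induced C W) G.
Proof.
move=> [[C_sym C_irr _] CG CG_edge] WC; split=> [| | x y /and3P[/CG_edge //]].
  split=> [x y /and3P[/C_sym e_yx xW yW] | x | x y /and3P[_ -> ->]] //=.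
    by rewrite e_yx xW yW.
  by rewrite (negbTE (C_irr x)).
exact: subset_trans CG.
Qed.

Lemma ohom_induced G C W f :
  ohom G C f -> {in overt G, forall x, f x \in W} -> ohom G (induced C W) f.
Proof.
move=> [_ f_incr f_edge] fW; split=> [x /fW // | x y xG yG | x y xG yG e_xy] /=.
- exact: f_incr.
- by rewrite f_edge ?fW.
Qed.

Lemma ordered_core_exists G : is_graph G -> exists C, is_ordered_core C G.
Proof.
move=> G_graph; have G_sub : is_subgraph G G by [].
have G_hom : ohom_exists G G by exists id.
have [C [C_sub C_hom] C_min] := ex_minimizer (fun C => #|overt C|)
  (P := fun C => is_subgraph C G /\ ohom_exists G C) (conj G_sub G_hom).
by exists C; split=> // C' C'_sub C'_hom; apply: C_min.
Qed.

Lemma ordered_core_endo_id C G t :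
  is_ordered_core C G -> ohom C C t -> {in overt C, t =1 id}.
Proof.
move=> [C_sub [g g_hom] C_min] t_hom; have [tC t_incr _] := t_hom.
have tCC : t @: overt C \subset overt C by apply/subsetP => _ /imsetP[x /tC tx ->].
have tg_hom : ohom G (induced C (t @: overt C)) (t \o g).
  apply: ohom_induced (ohom_comp g_hom t_hom) _ => x xG.
  by case: g_hom => gC _ _; apply/imset_f/gC.
have t_inj : {in overt C &, injective t}.
  apply/imset_injP; rewrite eqn_leq leq_imset_card /=.
  exact: C_min _ (induced_subgraph C_sub tCC) (ex_intro _ _ tg_hom).
by apply: incr_endo_id t_inj t_incr _; apply/subsetP.
Qed.

Lemma oiso_inv_ohom C K psi :
  ohom C K psi -> psi @: overt C = overt K ->
  (forall x y, x \in overt C -> y \in overt C -> oedge K (psi x) (psi y) -> oedge C x y) ->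
  ohom K C (inv_on (overt C) psi).
Proof.
move=> [_ psi_incr _] psi_img psi_refl; split=> [k | k l | k l]; rewrite -psi_img.
- by case/inv_onP.
- exact: inv_on_incr.
move=> kK lK; have [kC psi_k] := inv_onP kK; have [lC psi_l] := inv_onP lK.
by rewrite -{1}psi_k -{1}psi_l; apply: psi_refl.
Qed.

Lemma ordered_core_ohom_section C G K f :
  is_ordered_core C G -> oiso C K -> ohom G K f ->
  exists g, {in overt K, cancel g f} /\
            {in overt K &, forall k l, oedge K k l -> oedge G (g k) (g l)}.
Proof.
move=> C_core [psi [psi_hom _ psi_img psi_refl]] f_hom.
have [C_sub _ _] := C_core; have [_ _ CG_edge] := C_sub.
have inv_hom := oiso_inv_ohom psi_hom psi_img psi_refl.
have fC_hom := ohom_subgraph C_sub f_hom.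
have t_id := ordered_core_endo_id C_core (ohom_comp fC_hom inv_hom).
have psiK k : k \in overt K -> k \in psi @: overt C by rewrite psi_img.
have f_psi : {in overt C, f =1 psi}.
  move=> x xC; have [fC _ _] := fC_hom.
  by have [_ <-] := inv_onP (psiK _ (fC x xC)); congr psi; apply: t_id.
exists (inv_on (overt C) psi); split=> [k kK | k l kK lK e_kl].
  by have [kC psi_k] := inv_onP (psiK k kK); rewrite f_psi.
by have [_ _ inv_edge] := inv_hom; apply/CG_edge/inv_edge.
Qed.

Lemma proper_2coloring_ohom G K f col :
  ohom G K f -> proper_2coloring_on (oedge K) (overt K) col ->
  proper_2coloring_on (oedge G) (overt G) (col \o f).
Proof. by move=> [fK _ f_edge] col_ok x y xG yG e_xy; apply: col_ok; rewrite ?fK ?f_edge. Qed.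
End OrderedGraphs.

Section BackedgeGraph.
Variables (h : nat) (arc : rel 'I_h).

Lemma backedge_graph_is_graph (p : {perm 'I_h}) : is_graph (backedge_graph arc p).
Proof.
split=> [i j | i | i j _]; rewrite ?inE //.
  case/existsP=> u /existsP[v /andP[/andP[pu pv] back]].
  by apply/existsP; exists v; apply/existsP; exists u; rewrite pu pv orbC.
by apply/existsP => -[u /existsP[v /andP[_]]]; rewrite ltnn.
Qed.

Lemma backedge_graph_arc (p : {perm 'I_h}) u v :
  arc u v -> p v < p u -> oedge (backedge_graph arc p) (p v) (p u).
Proof.
move=> a_uv lt_vu; apply/existsP; exists v; apply/existsP; exists u.
by rewrite !eqxx lt_vu a_uv.
Qed.

Lemma acyclic_on_rank (r : 'I_h -> nat) (S : {set 'I_h}) :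
  {in S &, forall u v, arc u v -> r u < r v} -> acyclic_on arc S.
Proof.
move=> r_incr [//|u s] _ _ Sus; apply/negP.
move=> /(sub_in_cycle (e' := fun u v => r u < r v) r_incr Sus) /=.
move=> /(order_path_min (fun y x z => @ltn_trans (r y) (r x) (r z))).
by rewrite all_rcons ltnn.
Qed.

Lemma two_colorable_of_backedge_2coloring (p : {perm 'I_h}) col :
  oriented arc ->
  proper_2coloring_on (oedge (backedge_graph arc p)) (overt (backedge_graph arc p)) col ->
  two_colorable arc.
Proof.
move=> arc_or col_ok.
have forward u v : arc u v -> col (p u) = col (p v) -> p u < p v.
  move=> a_uv same_col; case: (ltngtP (p u) (p v)) => // [lt_vu | /val_inj/perm_inj eq_uv].
    have := col_ok _ _ (in_setT _) (in_setT _) (backedge_graph_arc a_uv lt_vu).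
    by rewrite same_col eqxx.
  by move: a_uv (arc_or _ _ a_uv); rewrite eq_uv => ->.
exists [set v | col (p v)].
split; apply: (@acyclic_on_rank (fun v => p v)) => u v; rewrite !inE => uA vA a_uv.
  by apply: forward; rewrite ?uA ?vA.
by apply: forward; rewrite ?(negbTE uA) ?(negbTE vA).
Qed.

Lemma backedge_ohom_section K (p : {perm 'I_h}) f :
  (forall C, in_cores arc C -> ohom_exists C K -> oiso C K) ->
  ohom (backedge_graph arc p) K f ->
  exists g, {in overt K, cancel g f} /\
    {in overt K &, forall k l, oedge K k l -> oedge (backedge_graph arc p) (g k) (g l)}.
Proof.
move=> K_min f_hom; have [C C_core] := ordered_core_exists (backedge_graph_is_graph p).
apply: (ordered_core_ohom_section C_core _ f_hom); apply: K_min; first by exists p.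
by have [C_sub _ _] := C_core; exists f; apply: ohom_subgraph C_sub f_hom.
Qed.
End BackedgeGraph.

Theorem corollary4p7 (h : nat) (arc : rel 'I_h) :
  oriented arc -> ~ two_colorable arc ->
  forall K : ograph h, in_cores arc K ->
  (forall C : ograph h, in_cores arc C -> ohom_exists C K -> oiso C K) ->
  exists c : seq 'I_h,
    [/\ 3 <= size c, uniq c, all (mem (overt K)) c & path.cycle (oedge K) c] /\
    forall (p : {perm 'I_h}) (f : 'I_h -> 'I_h),
      ohom (backedge_graph arc p) K f ->
      exists u : seq 'I_h,
        [/\ size u = size c, map f u = c, uniq u &
            path.cycle (oedge (backedge_graph arc p)) u].
Proof.
move=> arc_or not_2col K [p0 K_core] K_min.
have [[K_graph _ _] [f0 f0_hom] _] := K_core.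
have [[c K_c]|[col col_ok]] :=
  cycle_or_proper_2coloring (oedge_irr K_graph) (oedge_sym K_graph) (overt K).
  exists c; split=> // p f f_hom.
  have [g [gK g_edge]] := backedge_ohom_section K_min f_hom.
  by exists (map g c); apply: graph_cycle_lift K_c gK g_edge.
case: not_2col; apply: (two_colorable_of_backedge_2coloring (p := p0) arc_or).
exact: proper_2coloring_ohom f0_hom col_ok.
Qed.
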